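(* Let $K=\{p_1,\dots,p_N\}\subset\mathbb{R}^d$ be finite. Then: (i) $\eta$ is constant on each Voronoi cell, hence has finite range $\mathcal{E}$; (ii) $\{Q_\eta\}_{\eta\in\mathcal{E}}$ is a partition of $\mathbb{R}^d$, and $x\in Q_\eta$ if and only if $\nabla f(x)=\eta-x$; (iii) for every $\eta\in\mathcal{E}$, both $Q_\eta$ and $P_\eta$ are unions of Voronoi cells, and $Q_\eta\subseteq P_\eta$; (iv) for every $\eta\in\mathcal{E}$, $P_\eta$ is a polyhedron; (v) with $\beta:=\min\{|\eta-\bar\eta|^2:\eta,\bar\eta\in\mathcal{E},\eta\ne\bar\eta\}>0$, one has $|\bar\eta-x|^2\ge|\eta-x|^2+\beta$ for all distinct $\eta,\bar\eta\in\mathcal{E}$ and all $x\in Q_\eta\cap P_{\bar\eta}$.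
   Context: $K=\{p_1,\dots,p_N\}\subset\mathbb{R}^d$ consists of $N$ distinct points. $f(x):=-\tfrac12\operatorname{dist}_K(x)^2$, $g(x):=\max_{y\in K}(x\cdot y-\tfrac12|y|^2)$ (convex, with convex subdifferential $\partial g$). $\operatorname{opt}(x):=\{y\in K:|x-y|=\operatorname{dist}_K(x)\}$ and $\eta(x)$ is the orthogonal projection of $x$ onto $\operatorname{conv}(\operatorname{opt}(x))$. $\nabla f(x)$ is the minimal-norm element of $\partial f(x):=\{\xi: f(y)\ge f(x)+\xi\cdot(y-x)-\tfrac12|y-x|^2\ \forall y\}$. For $H\subseteq K$ the Voronoi cell is $V_H:=\{x:\operatorname{opt}(x)=H\}$. For $\eta\in\mathbb{R}^d$: $Q_\eta:=\{x:\eta(x)=\eta\}$ (potential zone) and $P_\eta:=\{x:\eta\in\partial g(x)\}$. A polyhedron is a nonempty closed convex set of the form $\bigcap_{j=1}^\ell\{x:T_j(x)\le0\}$ with $T_j$ affine. *)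

From HB Require Import structures.
From mathcomp Require Import all_boot all_order all_algebra.
From mathcomp Require Import all_classical all_reals all_analysis.
Set Implicit Arguments. Unset Strict Implicit. Unset Printing Implicit Defensive.
Import Order.TTheory GRing.Theory Num.Theory.
Import numFieldNormedType.Exports.
Local Open Scope classical_set_scope.
Local Open Scope ring_scope.

Section Defs.
Variables (R : realType) (d : nat).
Notation pt := 'rV[R]_d.

Definition dotp (x y : pt) : R := \sum_(i < d) x 0 i * y 0 i.
Definition sqn (x : pt) : R := dotp x x.

Variable K : seq pt.

(* dist_K(x)^2 = min_{y in K} |x - y|^2  (K is assumed nonempty in the theorem) *)
Definition distK2 (x : pt) : R :=
  \big[Num.min/sqn (x - head 0 K)]_(y <- K) sqn (x - y).

Definition fK (x : pt) : R := - (2^-1 * distK2 x).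

Definition gK (x : pt) : R :=
  \big[Num.max/(dotp x (head 0 K) - 2^-1 * sqn (head 0 K))]_(y <- K)
     (dotp x y - 2^-1 * sqn y).

Definition optK (x : pt) : set pt :=
  [set y | y \in K /\ sqn (x - y) = distK2 x].

Definition convK (S : set pt) : set pt :=
  [set z | exists lam : pt -> R,
     (forall y, 0 <= lam y) /\ (forall y, ~ S y -> lam y = 0) /\
     \sum_(y <- K) lam y = 1 /\ z = \sum_(y <- K) lam y *: y].

Definition is_proj (C : set pt) (x p : pt) : Prop :=
  C p /\ forall z, C z -> sqn (x - p) <= sqn (x - z).

Definition etaK (x : pt) : pt := xget 0 [set p | is_proj (convK (optK x)) x p].

(* semiconcave (proximal) superdifferential of f *)
Definition subdiff_f (x : pt) : set pt :=
  [set xi | forall y, fK y >= fK x + dotp xi (y - x) - 2^-1 * sqn (y - x)].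

Definition is_min_norm (S : set pt) (xi : pt) : Prop :=
  S xi /\ forall z, S z -> sqn xi <= sqn z.

Definition gradf (x : pt) : pt := xget 0 [set xi | is_min_norm (subdiff_f x) xi].

Definition subdiff_g (x : pt) : set pt :=
  [set xi | forall y, gK y >= gK x + dotp xi (y - x)].

Definition Vcell (H : set pt) : set pt := [set x | optK x = H].
Definition Qz (e : pt) : set pt := [set x | etaK x = e].
Definition Pz (e : pt) : set pt := [set x | subdiff_g x e].

End Defs.

Definition is_convex_set (R : realType) (d : nat) (S : set 'rV[R]_d) : Prop :=
  forall x y t, S x -> S y -> 0 <= t <= 1 -> S ((1 - t) *: x + t *: y).

Definition polyhedron (R : realType) (d : nat) (S : set 'rV[R]_d) : Prop :=
  S !=set0 /\ closed S /\ is_convex_set S /\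
  exists (l : nat) (a : 'I_l -> 'rV[R]_d) (b : 'I_l -> R),
    S = [set x | forall j, dotp (a j) x + b j <= 0].

From HB Require Import structures.
From mathcomp Require Import all_boot all_order all_algebra.
From mathcomp Require Import all_classical all_reals all_analysis.
From mathcomp Require Import ring lra.
Import Order.TTheory GRing.Theory Num.Theory.
Import numFieldNormedType.Exports.
Local Open Scope classical_set_scope.
Local Open Scope ring_scope.
Set Implicit Arguments. Unset Strict Implicit. Unset Printing Implicit Defensive.

(* With aff p x := x.p - |p|^2/2 we have g = max_{p in K} aff p and
   f(x) = g(x) - |x|^2/2, and opt(x) is the set of pieces active at x.  Hence
   the semiconcave superdifferential of f at x is the convex subdifferential
   of g at x shifted by -x, and the latter is described by its support
   function: e is a subgradient iff in every direction v some active p has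
   e.v <= p.v.  Combining this with the variational inequality of the
   projection eta(x) onto the (compact, convex) hull of opt(x) gives the key
   estimate  |xi - x|^2 >= |eta(x) - x|^2 + |xi - eta(x)|^2  for every
   subgradient xi of g at x (lemma subg_dist).  It yields at once that eta(x)
   is the subgradient nearest to x, i.e. nabla f(x) = eta(x) - x, and the
   separation (v).  Constancy of eta on Voronoi cells comes from the fact
   that moving x inside a cell shifts all squared distances to the hull by a
   constant; finiteness follows since K has finitely many subsets; and P_e,
   a sublevel set of g - e., is cut out by one half-space per point of K. *)

Section InnerProduct.
Variables (R : realType) (d : nat).
Implicit Types x y z u w : 'rV[R]_d.

Lemma dotpC x y : dotp x y = dotp y x.
Proof. by apply: eq_bigr => i _; rewrite mulrC. Qed.

Lemma dotpDl x y z : dotp (x + y) z = dotp x z + dotp y z.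
Proof. by rewrite /dotp -big_split; apply: eq_bigr => i _; rewrite !mxE mulrDl. Qed.

Lemma dotpNl x z : dotp (- x) z = - dotp x z.
Proof. by rewrite /dotp -sumrN; apply: eq_bigr => i _; rewrite !mxE mulNr. Qed.

Lemma dotpZl (a : R) x z : dotp (a *: x) z = a * dotp x z.
Proof. by rewrite /dotp mulr_sumr; apply: eq_bigr => i _; rewrite !mxE mulrA. Qed.

Lemma dotpBl x y z : dotp (x - y) z = dotp x z - dotp y z.
Proof. by rewrite dotpDl dotpNl. Qed.

Lemma dotpDr x y z : dotp z (x + y) = dotp z x + dotp z y.
Proof. by rewrite dotpC dotpDl !(dotpC z). Qed.

Lemma dotpNr x z : dotp z (- x) = - dotp z x.
Proof. by rewrite dotpC dotpNl dotpC. Qed.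

Lemma dotpBr x y z : dotp z (x - y) = dotp z x - dotp z y.
Proof. by rewrite dotpC dotpBl !(dotpC z). Qed.

Lemma dotpZr (a : R) x z : dotp z (a *: x) = a * dotp z x.
Proof. by rewrite dotpC dotpZl dotpC. Qed.

Lemma dotp_suml (I : Type) (s : seq I) (F : I -> 'rV[R]_d) z :
  dotp (\sum_(i <- s) F i) z = \sum_(i <- s) dotp (F i) z.
Proof.
elim: s => [|a s IH]; last by rewrite !big_cons dotpDl IH.
by rewrite !big_nil /dotp big1 // => i _; rewrite mxE mul0r.
Qed.

Lemma sqn_ge0 x : 0 <= sqn x.
Proof. by rewrite /sqn /dotp sumr_ge0 // => i _; rewrite -expr2 sqr_ge0. Qed.

Lemma sqn_eq0 x : sqn x = 0 -> x = 0.
Proof.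
move=> x0; apply/matrixP => i j; rewrite mxE (ord1 i).
have sq_ge0 k : predT k -> 0 <= x 0 k * x 0 k by rewrite -expr2 sqr_ge0.
have /eqP := @psumr_eq0P _ _ predT (fun k => x 0 k * x 0 k) sq_ge0 x0 j isT.
by rewrite mulf_eq0 orbb => /eqP.
Qed.

Lemma sqn_gt0 x : x != 0 -> 0 < sqn x.
Proof.
move=> x_neq0; rewrite lt_neqAle sqn_ge0 andbT eq_sym.
by apply: contra x_neq0 => /eqP/sqn_eq0->.
Qed.

Lemma sqnD u w : sqn (u + w) = sqn u + 2 * dotp u w + sqn w.
Proof. by rewrite /sqn dotpDl !dotpDr (dotpC w u); ring. Qed.

Lemma sqnB u w : sqn (u - w) = sqn u - 2 * dotp u w + sqn w.
Proof. by rewrite /sqn dotpBl !dotpBr (dotpC w u); ring. Qed.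

Lemma sqnZ (a : R) u : sqn (a *: u) = a ^+ 2 * sqn u.
Proof. by rewrite /sqn dotpZl dotpZr mulrA expr2. Qed.

Lemma dotp_continuous (a : 'rV[R]_d) : continuous (dotp a).
Proof.
apply: continuous_big => [|i _]; first exact: add_continuous.
by move=> x; apply: continuousM; [exact: cst_continuous|exact: coord_continuous].
Qed.

Lemma sqn_continuous : continuous (@sqn R d).
Proof.
apply: continuous_big => [|i _]; first exact: add_continuous.
by move=> x; apply: continuousM; exact: coord_continuous.
Qed.

End InnerProduct.

Section FiniteSeq.
Variable (T : eqType).

Lemma big_selects (V : Type) (op : V -> V -> V) (x0 : V) (s : seq T) (F : T -> V) :
  (forall a b, op a b = a \/ op a b = b) ->
  \big[op/x0]_(i <- s) F i = x0 \/ exists2 i, i \in s & \big[op/x0]_(i <- s) F i = F i.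
Proof.
move=> sel; elim: s => [|a s IH]; first by left; rewrite big_nil.
rewrite big_cons; case: (sel (F a) (\big[op/x0]_(i <- s) F i)) => ->.
  by right; exists a; rewrite ?mem_head.
case: IH => [|[i si]] ->; first by left.
by right; exists i; rewrite // in_cons si orbT.
Qed.

Lemma min_selects (R : realDomainType) (a b : R) : Num.min a b = a \/ Num.min a b = b.
Proof. by rewrite /Num.min; case: (a < b); [left|right]. Qed.

Lemma max_selects (R : realDomainType) (a b : R) : Num.max a b = a \/ Num.max a b = b.
Proof. by rewrite /Num.max; case: (a < b); [right|left]. Qed.

Lemma sum_pred1_uniq (V : nmodType) (s : seq T) (F : T -> V) p :
  uniq s -> p \in s -> \sum_(y <- s | y == p) F y = F p.
Proof. by move=> us ps; rewrite -big_filter filter_pred1_uniq // big_seq1. Qed.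

Lemma common_threshold (R : realDomainType) (s : seq T) (P : T -> R -> Prop) :
  (forall p, p \in s -> exists2 t0, 0 < t0 & forall t, 0 < t <= t0 -> P p t) ->
  exists2 t0, 0 < t0 & forall p, p \in s -> forall t, 0 < t <= t0 -> P p t.
Proof.
elim: s => [|a s IH] H; first by exists 1.
have [|t1 t10 H1] := IH; first by move=> p ps; apply: H; rewrite in_cons ps orbT.
have [t2 t20 H2] := H a (mem_head _ _).
exists (Num.min t1 t2); first by rewrite lt_min t10 t20.
move=> p + t /andP[t0]; rewrite le_min => /orP[/eqP->|ps] /andP[t1m t2m].
  by apply: H2; rewrite t0 t2m.
by apply: H1; rewrite ?t0.
Qed.

Lemma small_mul_lt (R : realFieldType) (w c : R) : 0 < c ->
  exists2 t0, 0 < t0 & forall t, 0 < t <= t0 -> t * w < c.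
Proof.
move=> c_gt0; have n_gt0 : 0 < 1 + `|w| by rewrite ltr_pwDl.
exists (c / (1 + `|w|)); first by rewrite divr_gt0.
move=> t /andP[t_gt0]; rewrite ler_pdivlMr // => tc.
have := ler_norm w; nra.
Qed.

(* A finite set has finitely many subsets: each one is the set of elements
   of a filtered (i.e. masked) subsequence. *)
Lemma finite_subsets (s : seq T) :
  finite_set [set H : set T | H `<=` [set x | x \in s]].
Proof.
apply: (@sub_finite_set _ _ ((fun m : (size s).-tuple bool => [set` mask m s]) @` setT)).
  move=> H Hs; pose m := map_tuple (fun x => `[< H x >]) (in_tuple s).
  exists m => //; rewrite /= -filter_mask; apply/seteqP; split => x /=.
    by rewrite mem_filter => /andP[/asboolP].
  by move=> Hx; rewrite mem_filter (Hs x Hx) andbT; apply/asboolP.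
exact/finite_image/finite_finset.
Qed.

End FiniteSeq.

Section Envelope.
Variables (R : realType) (d : nat) (K : seq 'rV[R]_d).
Hypothesis HK0 : K != [::].
Implicit Types x y p : 'rV[R]_d.

Definition aff p x : R := dotp x p - 2^-1 * sqn p.

Lemma head_in : head 0 K \in K.
Proof. by case: K HK0 => // a s _; rewrite mem_head. Qed.

Lemma distK2_le x y : y \in K -> distK2 K x <= sqn (x - y).
Proof. by move=> yK; rewrite ge_bigmin_seq. Qed.

Lemma distK2_attained x : exists2 y, y \in K & distK2 K x = sqn (x - y).
Proof.
case: (big_selects (sqn (x - head 0 K)) K (fun y => sqn (x - y)) (@min_selects R)).
  by exists (head 0 K); rewrite ?head_in.
by case=> y yK; exists y.
Qed.

Lemma gK_ge x p : p \in K -> aff p x <= gK K x.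
Proof. by move=> pK; apply: (@le_bigmax_seq _ _ _ K _ p xpredT (aff^~ x)). Qed.

Lemma gK_attained x : exists2 p, p \in K & gK K x = aff p x.
Proof.
have [|[p pK]] := big_selects (aff (head 0 K) x) K (fun p => aff p x) (@max_selects R).
  by exists (head 0 K); rewrite ?head_in.
by exists p.
Qed.

Lemma aff_sqn p x : aff p x = 2^-1 * sqn x - 2^-1 * sqn (x - p).
Proof. rewrite /aff sqnB; lra. Qed.

Lemma aff_shift p x y : aff p y = aff p x + dotp p (y - x).
Proof. rewrite /aff dotpBr !(dotpC p); lra. Qed.

Lemma gK_distK2 x : gK K x = 2^-1 * sqn x - 2^-1 * distK2 K x.
Proof.
have [p pK gp] := gK_attained x; have [q qK dq] := distK2_attained x.
have := gK_ge x qK; have := distK2_le x pK.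
rewrite gp dq !aff_sqn => h1 h2; lra.
Qed.

Lemma fK_gK x : fK K x = gK K x - 2^-1 * sqn x.
Proof. rewrite /fK gK_distK2; lra. Qed.

Lemma opt_aff x p : optK K x p <-> p \in K /\ aff p x = gK K x.
Proof.
rewrite /optK /= gK_distK2 aff_sqn.
by split=> -[pK h]; split=> //; [rewrite h | lra].
Qed.

Lemma opt_nonempty x : exists p, optK K x p.
Proof. by have [p pK dp] := distK2_attained x; exists p. Qed.

Lemma opt_subg x p : optK K x p -> subdiff_g K x p.
Proof.
move=> /opt_aff[pK gp] y; have := gK_ge y pK.
by rewrite (aff_shift p x y) gp dotpC.
Qed.

Lemma subdiff_fg x xi : subdiff_f K x xi <-> subdiff_g K x (xi + x).
Proof.
have polar y : 2^-1 * sqn y - 2^-1 * sqn x - 2^-1 * sqn (y - x) = dotp x (y - x).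
  have -> : sqn y = sqn ((y - x) + x) by rewrite subrK.
  rewrite sqnD (dotpC (y - x)); lra.
by split=> H y; have := H y; have := polar y; rewrite !fK_gK dotpDl; lra.
Qed.

End Envelope.

Section Projection.
Variables (R : realType) (d : nat) (C : set 'rV[R]_d).
Hypothesis convexC : is_convex_set C.
Implicit Types x y z p : 'rV[R]_d.

Lemma proj_variational x p z : is_proj C x p -> C z -> dotp (x - p) (z - p) <= 0.
Proof.
move=> [Cp pmin] Cz; rewrite leNgt; apply/negP => a_gt0.
set a := dotp (x - p) (z - p) in a_gt0; set b := sqn (z - p).
have b_ge0 : 0 <= b by exact: sqn_ge0.
(* moving from p towards z by a small step s decreases the distance to x *)
set s := Num.min 1 (a / (b + 1)).
have s_gt0 : 0 < s by rewrite lt_min ltr01 divr_gt0 //; lra.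
have s01 : 0 <= s <= 1 by rewrite (ltW s_gt0) ge_min lexx.
have sb_le : s * (b + 1) <= a by rewrite -ler_pdivlMr ?ge_min ?lexx ?orbT //; lra.
have step : x - ((1 - s) *: p + s *: z) = (x - p) - s *: (z - p).
  by apply/matrixP => i j; rewrite !mxE; ring.
have := pmin _ (convexC Cp Cz s01).
rewrite step (sqnB (x - p)) sqnZ dotpZr -/a -/b => h.
have : 2 * a <= s * b by rewrite -(ler_pM2l s_gt0); nra.
nra.
Qed.

Lemma proj_unique x p1 p2 : is_proj C x p1 -> is_proj C x p2 -> p1 = p2.
Proof.
move=> P1 P2; have h1 := proj_variational P1 P2.1; have h2 := proj_variational P2 P1.1.
have gap : sqn (p2 - p1) = dotp (x - p1) (p2 - p1) + dotp (x - p2) (p1 - p2).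
  rewrite -(opprB p2 p1) dotpNr -dotpBl /sqn; congr dotp.
  by rewrite opprB [RHS]addrC addrA subrK.
have /sqn_eq0 /eqP : sqn (p2 - p1) = 0 by apply/eqP; rewrite eq_le sqn_ge0 gap; lra.
by rewrite subr_eq0 => /eqP.
Qed.

Lemma proj_shift x y p (k : R) :
  (forall z, C z -> sqn (y - z) = sqn (x - z) + k) -> is_proj C x p -> is_proj C y p.
Proof.
move=> shift [Cp pmin]; split=> // z Cz.
by rewrite shift // shift // lerD2r; exact: pmin.
Qed.

End Projection.

Section Hull.
Variables (R : realType) (d : nat) (K : seq 'rV[R]_d).
Hypothesis HKu : uniq K.
Implicit Types (S : set 'rV[R]_d) (x z w p : 'rV[R]_d).

Lemma conv_convex S : is_convex_set (convK K S).
Proof.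
move=> _ _ t [l1 [l1_ge0 [l1S [l1_sum ->]]]] [l2 [l2_ge0 [l2S [l2_sum ->]]]] /andP[t0 t1].
exists (fun y => (1 - t) * l1 y + t * l2 y); split.
  by move=> y; rewrite addr_ge0 // mulr_ge0 // subr_ge0.
split; first by move=> y Sy; rewrite l1S // l2S // !mulr0 addr0.
split; first by rewrite big_split /= -!mulr_sumr l1_sum l2_sum; ring.
rewrite !scaler_sumr -big_split /=; apply: eq_bigr => y _.
by rewrite !scalerA -scalerDl.
Qed.

Lemma conv_point S p : S p -> p \in K -> convK K S p.
Proof.
move=> Sp pK; exists (fun y => if y == p then 1 else 0); split.
  by move=> y; case: eqP.
split; first by move=> y Sy; case: eqP => // yp; rewrite yp in Sy.
split; first by rewrite -big_mkcond sum_pred1_uniq.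
rewrite (eq_bigr (fun y => if y == p then y else 0)).
  by rewrite -big_mkcond sum_pred1_uniq.
by move=> y _; case: eqP => _; rewrite ?scale1r ?scale0r.
Qed.

Lemma conv_dot_le S z w (c : R) : convK K S z ->
  (forall h, S h -> dotp h w <= c) -> dotp z w <= c.
Proof.
move=> [l [l_ge0 [lS [l_sum ->]]]] bound; rewrite dotp_suml.
rewrite -[c]mul1r -l_sum mulr_suml; apply: ler_sum => y _; rewrite dotpZl.
by case: (pselect (S y)) => Sy; [rewrite ler_wpM2l ?bound | rewrite lS // !mul0r].
Qed.

Definition weights S : set 'rV[R]_(size K) :=
  \bigcap_(i in [set: 'I_(size K)])
     ([set l | 0 <= l ord0 i] `&` [set l | ~ S (nth 0 K i) -> l ord0 i = 0])
  `&` [set l | \sum_(i < size K) l ord0 i = 1].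

Definition comb (l : 'rV[R]_(size K)) : 'rV[R]_d :=
  \sum_(i < size K) l ord0 i *: nth 0 K i.

Lemma conv_weights S : convK K S = comb @` weights S.
Proof.
have sum_nth (V : nmodType) (F : 'rV[R]_d -> V) :
    \sum_(y <- K) F y = \sum_(i < size K) F (nth 0 K i).
  by rewrite (big_nth 0) big_mkord.
apply/seteqP; split => z.
  move=> [lam [lam_ge0 [lamS [lam_sum ->]]]].
  exists (\row_(i < size K) lam (nth 0 K i)).
    split; last by rewrite /= -lam_sum sum_nth; apply: eq_bigr => i _; rewrite mxE.
    by move=> i _; split => /=; rewrite mxE //; apply: lamS.
  by rewrite /comb sum_nth; apply: eq_bigr => i _; rewrite mxE.
move=> [l [/= l_coord l_sum] <-].
(* the weight of a point of K is the weight at its (unique) position *)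
pose lam y := \sum_(i < size K | nth 0 K i == y) l ord0 i.
have lam_nth (j : 'I_(size K)) : lam (nth 0 K j) = l ord0 j.
  by apply: big_pred1 => i /=; rewrite nth_uniq // -val_eqE.
exists lam; split.
  by move=> y; apply: sumr_ge0 => i _; case: (l_coord i I).
split.
  by move=> y Sy; apply: big1 => i /eqP iy; case: (l_coord i I) => _; apply; rewrite iy.
split; first by rewrite sum_nth -l_sum; apply: eq_bigr => j _; rewrite lam_nth.
by rewrite sum_nth /comb; apply: eq_bigr => j _; rewrite lam_nth.
Qed.

Lemma weights_closed S : closed (weights S).
Proof.
have coord_closed i (D : set R) :
    closed D -> closed [set l : 'rV[R]_(size K) | D (l ord0 i)].
  apply: (preimage_closed (f := fun l : 'rV[R]_(size K) => l ord0 i)) => l _.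
  exact: coord_continuous.
apply: closedI; last first.
  apply: (preimage_closed (f := fun l : 'rV[R]_(size K) => \sum_(i < size K) l ord0 i)
    (D := [set r : R | r = 1])).
    move=> l _; apply: continuous_big => [|i _]; first exact: add_continuous.
    exact: coord_continuous.
  exact: closed_eq.
apply: closed_bigI => i _; apply: closedI.
  by apply: (coord_closed i [set r | 0 <= r]); exact: closed_ge.
have [Si|Si] := pselect (S (nth 0 K i)).
  rewrite (_ : [set l | _] = setT) ?closedT //.
  by apply/seteqP; split => // l _ /(_ Si).
rewrite (_ : [set l | _] = [set l | [set 0] (l ord0 i)]).
  by apply: (coord_closed i [set 0]); exact: closed_eq.
by apply/seteqP; split => l /=; [apply | move=> ->].
Qed.

Lemma weights_compact S : compact (weights S).
Proof.
have box := @rV_compact _ (size K) (fun=> `[(0:R), 1]%classic)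
  (fun=> @segment_compact R 0 1).
suff in_box : weights S `<=` [set l | forall i, `[(0:R), 1]%classic (l ord0 i)].
  exact: (subclosed_compact (@weights_closed S) box in_box).
move=> l [/= l_coord l_sum] i; rewrite /= in_itv /=; have [l_ge0 _] := l_coord i I.
rewrite l_ge0 -l_sum (bigD1 i) //= lerDl.
by apply: sumr_ge0 => j _; case: (l_coord j I).
Qed.

Lemma conv_compact S : compact (convK K S).
Proof.
rewrite conv_weights; apply: continuous_compact (@weights_compact S).
apply: continuous_subspaceT; apply: continuous_big => [|i _]; first exact: add_continuous.
by move=> l; apply: continuousZr_tmp; exact: coord_continuous.
Qed.

Lemma proj_exists S x : (exists2 p, S p & p \in K) -> exists p, is_proj (convK K S) x p.
Proof.
move=> [p0 Sp0 p0K].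
have dist_cont : continuous (fun z => sqn (x - z)).
  move=> z; apply: (continuous_comp (f := fun z => x - z)); last exact: sqn_continuous.
  by apply: continuousB; [exact: cst_continuous | exact: cvg_id].
have [|c Cc cmin] := EVT_min_rV _ (@conv_compact S) (continuous_subspaceT dist_cont).
  by exists p0; exact: conv_point.
exists c; split; first by rewrite inE in Cc.
by move=> z Cz; apply: cmin; rewrite inE.
Qed.

End Hull.

Section Eta.
Variables (R : realType) (d : nat) (K : seq 'rV[R]_d).
Hypotheses (HK0 : K != [::]) (HKu : uniq K).
Implicit Types x y z v p e xi : 'rV[R]_d.

Lemma eta_proj x : is_proj (convK K (optK K x)) x (etaK K x).
Proof.
apply: xgetPex; apply: proj_exists => //.
by have [p xp] := opt_nonempty HK0 x; exists p => //; case: xp.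
Qed.

Lemma eta_unique x p : is_proj (convK K (optK K x)) x p -> etaK K x = p.
Proof. exact/proj_unique/eta_proj/conv_convex. Qed.

Lemma hull_subg x z : convK K (optK K x) z -> subdiff_g K x z.
Proof.
move=> xz y; rewrite -lerBrDl; apply: conv_dot_le xz _ => p xp.
by rewrite lerBrDl; exact: opt_subg.
Qed.

Lemma subg_support x e : subdiff_g K x e <->
  forall v, exists2 p, optK K x p & dotp e v <= dotp p v.
Proof.
split; last first.
  move=> supp y; have [p xp le_ep] := supp (y - x).
  by apply: le_trans _ (opt_subg HK0 xp y); rewrite lerD2l.
move=> e_subg v; apply: contrapT => no_p.
have lt_active p : optK K x p -> dotp p v < dotp e v.
  by move=> xp; rewrite ltNge; apply/negP => le_ep; apply: no_p; exists p.
have [t t_gt0 below] : exists2 t, 0 < t &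
    forall p, p \in K -> forall s, 0 < s <= t ->
      aff p x + s * dotp p v < gK K x + s * dotp e v.
  apply: common_threshold => p pK; case: (pselect (optK K x p)) => xp.
    have [_ ->] := (opt_aff HK0 x p).1 xp.
    by exists 1 => // s /andP[s_gt0 _]; rewrite ltrD2l ltr_pM2l // lt_active.
  have gap : 0 < gK K x - aff p x.
    rewrite subr_gt0 lt_neqAle gK_ge // andbT; apply/eqP => eq_gp.
    by apply: xp; apply/(opt_aff HK0); split.
  have [t0 t0_gt0 small] := small_mul_lt (dotp p v - dotp e v) gap.
  by exists t0 => // s /small; lra.
have [q qK gq] := gK_attained HK0 (x + t *: v).
have := e_subg (x + t *: v); rewrite gq (aff_shift q x) (addrC x) addrK !dotpZr.
by have := below q qK t; rewrite t_gt0 lexx => /(_ isT); lra.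
Qed.

Lemma subg_dist x xi : subdiff_g K x xi ->
  sqn (etaK K x - x) + sqn (xi - etaK K x) <= sqn (xi - x).
Proof.
move=> /subg_support /(_ (x - etaK K x)) [p xp le_xi].
have xpK : p \in K by case: xp.
have le_e := proj_variational (@conv_convex _ _ K _) (eta_proj x) (conv_point HKu xp xpK).
set e := etaK K x in le_xi le_e *.
have -> : xi - x = (xi - e) + (e - x) by rewrite addrA subrK.
have cross : dotp (xi - e) (e - x) = dotp e (x - e) - dotp xi (x - e).
  by rewrite -(opprB x e) dotpNr dotpBl opprB.
rewrite dotpBr !(dotpC (x - e)) in le_e.
rewrite (sqnD (xi - e)) cross; lra.
Qed.

Lemma eta_subg x : subdiff_g K x (etaK K x).
Proof. exact/hull_subg/(eta_proj x).1. Qed.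

Lemma gradf_eta x : gradf K x = etaK K x - x.
Proof.
have dist_f xi : subdiff_f K x xi ->
    sqn (etaK K x - x) + sqn (xi + x - etaK K x) <= sqn xi.
  by move=> /(subdiff_fg HK0) /subg_dist; rewrite addrK.
have min_eta : is_min_norm (subdiff_f K x) (etaK K x - x).
  split; first by apply/(subdiff_fg HK0); rewrite subrK; exact: eta_subg.
  by move=> xi /dist_f; have := sqn_ge0 (xi + x - etaK K x); lra.
have [/dist_f le_grad /(_ _ min_eta.1) le_eta] : is_min_norm (subdiff_f K x) (gradf K x).
  by apply: xgetPex; exists (etaK K x - x).
have : sqn (gradf K x + x - etaK K x) = 0.
  by apply/eqP; rewrite eq_le sqn_ge0 andbT; lra.
by move=> /sqn_eq0 /eqP; rewrite subr_eq0 => /eqP <-; rewrite addrK.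
Qed.

(* eta is constant on Voronoi cells: moving the base point inside a cell
   shifts all squared distances to the common hull by one constant. *)
Lemma eta_cell x y : optK K x = optK K y -> etaK K x = etaK K y.
Proof.
move=> same_opt; apply/esym/eta_unique; rewrite -same_opt.
set c := 2^-1 * (sqn y - sqn x - distK2 K y + distK2 K x).
have on_hull z : convK K (optK K x) z -> dotp z (y - x) = c.
  move=> xz; have on_opt h : optK K x h -> dotp h (y - x) = c.
    move=> xh; have yh : optK K y h by rewrite -same_opt.
    case: xh yh => _ dx [_ dy]; rewrite /c -dx -dy !sqnB dotpBr !(dotpC h); lra.
  have le1 : dotp z (y - x) <= c by apply: conv_dot_le xz _ => h /on_opt ->.
  have le2 : dotp z (- (y - x)) <= - c.
    by apply: conv_dot_le xz _ => h /on_opt; rewrite dotpNr => ->.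
  by rewrite dotpNr in le2; lra.
apply: (@proj_shift _ _ _ x y _ (sqn (y - x) + 2 * (dotp (y - x) x - c))) (eta_proj x).
move=> z /on_hull hz; have -> : y - z = (y - x) + (x - z) by rewrite addrA subrK.
by rewrite (sqnD (y - x)) dotpBr (dotpC (y - x) z) hz; lra.
Qed.

End Eta.

Lemma halfspaces_polyhedron (R : realType) (d l : nat)
    (a : 'I_l -> 'rV[R]_d) (b : 'I_l -> R) :
  let P := [set x | forall j, dotp (a j) x + b j <= 0] in
  P !=set0 -> polyhedron P.
Proof.
move=> P P_n0; split=> //; split; last split; last by exists l, a, b.
- rewrite (_ : P = \bigcap_(j in [set: 'I_l]) [set x | dotp (a j) x + b j <= 0]).
    apply: closed_bigI => j _.
    apply: (preimage_closed (f := fun x => dotp (a j) x + b j)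
      (D := [set r : R | r <= 0])).
      by move=> x _; apply: continuousD; [exact: dotp_continuous | exact: cst_continuous].
    exact: closed_le.
  by apply/seteqP; split => x /= H j; [move=> _; apply: H | apply: H].
- move=> x y t Px Py /andP[t0 t1] j; have := Px j; have := Py j.
  rewrite dotpDr !dotpZr; nra.
Qed.

Section Zones.
Variables (R : realType) (d : nat) (K : seq 'rV[R]_d).
Hypotheses (HK0 : K != [::]) (HKu : uniq K).
Implicit Types (x y e : 'rV[R]_d) (A : set 'rV[R]_d).

Lemma opt_subK x : optK K x `<=` [set p | p \in K].
Proof. by move=> p []. Qed.

Lemma cell_union A : (forall x y, optK K x = optK K y -> A x -> A y) ->
  exists2 Hs : set (set 'rV[R]_d), (forall H, Hs H -> H `<=` [set p | p \in K]) &
    A = \bigcup_(H in Hs) Vcell K H.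
Proof.
move=> A_inv; exists (optK K @` A); first by move=> _ [x _ <-]; exact: opt_subK.
apply/seteqP; split=> [x Ax | x [_ [y Ay <-] yx]]; first by exists (optK K x).
by apply: A_inv Ay; rewrite yx.
Qed.

(* Finitely many cells, hence finitely many values of eta. *)
Lemma eta_range_finite : finite_set (range (etaK K)).
Proof.
pose eta_of (H : set 'rV[R]_d) := etaK K (xget 0 (Vcell K H)).
have cells_finite : finite_set (range (optK K)).
  by apply: sub_finite_set (finite_subsets K) => _ [x _ <-]; exact: opt_subK.
apply: sub_finite_set (finite_image eta_of cells_finite) => _ [x _ <-].
exists (optK K x); first by exists x.
apply: (eta_cell HK0 HKu); apply: (@xgetPex _ 0 (Vcell K (optK K x))).
by exists x.
Qed.

Lemma Pz_cell e x y : optK K x = optK K y -> Pz K e x -> Pz K e y.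
Proof. by move=> xy; rewrite /Pz /= !(subg_support HK0) xy. Qed.

(* Once e is a subgradient somewhere, say at x0, P_e is the sublevel set
   {g - e.  <= g(x0) - e.x0}: the subgradient inequality says exactly that
   x minimizes g - e. . *)
Lemma Pz_sublevel e x0 x : Pz K e x0 ->
  Pz K e x <-> gK K x - dotp e x <= gK K x0 - dotp e x0.
Proof.
move=> ex0; split=> [ex | le_x y].
  by have := ex x0; rewrite dotpBr; lra.
by have := ex0 y; rewrite !dotpBr; lra.
Qed.

Lemma Pz_halfspaces e x0 : Pz K e x0 ->
  Pz K e = [set x | forall j : 'I_(size K), dotp (nth 0 K j - e) x +
             (- (2^-1 * sqn (nth 0 K j)) - (gK K x0 - dotp e x0)) <= 0].
Proof.
move=> ex0; apply/seteqP; split=> x /=.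
  move=> /(Pz_sublevel x ex0) le_x j.
  have := gK_ge x (mem_nth 0 (ltn_ord j)); rewrite /aff dotpBl (dotpC x); lra.
move=> below; apply/(Pz_sublevel x ex0).
have [q qK ->] := gK_attained HK0 x.
have q_idx : (index q K < size K)%N by rewrite index_mem.
by have := below (Ordinal q_idx); rewrite /= nth_index // /aff dotpBl (dotpC x); lra.
Qed.

Lemma Pz_polyhedron e x0 : Pz K e x0 -> polyhedron (Pz K e).
Proof.
move=> ex0; rewrite (Pz_halfspaces ex0); apply: halfspaces_polyhedron.
by exists x0; rewrite -(Pz_halfspaces ex0).
Qed.

End Zones.


Theorem proposition3p5 (R : realType) (d : nat) (K : seq 'rV[R]_d)
  (HK0 : K != [::]) (HKu : uniq K) :
  let E := range (etaK K) in
  (* (i) *)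
  (forall (H : set 'rV[R]_d) x y, H `<=` [set p | p \in K] ->
      Vcell K H x -> Vcell K H y -> etaK K x = etaK K y) /\
  finite_set E /\
  (* (ii) *)
  ((forall x, exists2 e, E e & Qz K e x) /\
   (forall e e', E e -> E e' -> e <> e' -> Qz K e `&` Qz K e' = set0) /\
   (forall e, E e -> Qz K e !=set0) /\
   (forall e x, E e -> (Qz K e x <-> gradf K x = e - x))) /\
  (* (iii) *)
  (forall e, E e ->
     (exists2 Hs : set (set 'rV[R]_d),
        (forall H, Hs H -> H `<=` [set p | p \in K]) &
        Qz K e = \bigcup_(H in Hs) Vcell K H) /\
     (exists2 Hs : set (set 'rV[R]_d),
        (forall H, Hs H -> H `<=` [set p | p \in K]) &
        Pz K e = \bigcup_(H in Hs) Vcell K H) /\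
     Qz K e `<=` Pz K e) /\
  (* (iv) *)
  (forall e, E e -> polyhedron (Pz K e)) /\
  (* (v) *)
  (forall beta : R,
     let D := [set t : R | exists e, exists e',
                 [/\ E e, E e', e <> e' & t = sqn (e - e')]] in
     D beta -> (forall t, D t -> beta <= t) ->
     0 < beta /\
     (forall e e' x, E e -> E e' -> e <> e' -> Qz K e x -> Pz K e' x ->
        sqn (e' - x) >= sqn (e - x) + beta)).
Proof.
move=> E; have eta_cellK := eta_cell HK0 HKu.
split; first by move=> H x y _ xH yH; apply: eta_cellK; rewrite xH yH.
split; first exact: eta_range_finite.
split.
  split; first by move=> x; exists (etaK K x); first exists x.
  split.
    by move=> e e' _ _ ne; apply/seteqP; split=> x // [ex e'x]; apply: ne; rewrite -ex -e'x.
  split; first by move=> e [x _ <-]; exists x.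
  by move=> e x _; rewrite (gradf_eta HK0 HKu); split=> [<- | /addIr].
split.
  move=> e _; split; first by apply: cell_union => x y /eta_cellK xy; rewrite /Qz /= xy.
  split; first by apply: cell_union => x y; exact: Pz_cell.
  by move=> x <-; exact: eta_subg.
split; first by move=> e [x0 _ <-]; exact/Pz_polyhedron/eta_subg.
move=> beta D [e0 [e1 [_ _ ne01 beta_eq]]] beta_min; split.
  by rewrite beta_eq; apply: sqn_gt0; rewrite subr_eq0; apply/eqP.
move=> e e' x Ee Ee' ne ex e'x.
have := subg_dist HK0 HKu e'x; rewrite ex.
have : beta <= sqn (e' - e) by apply: beta_min; exists e', e; split=> //; exact: nesym.
lra.
Qed.
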